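(* Let $q=4$, let $k>0$ be an even integer, and let $g=S_{k+1}^2+S_{2k}^{q^k+1}$. For every $a\in\mathbb{F}_{q^{3k}}$ with $\operatorname{Tr}_{q^{3k}/q^k}(a)\neq 0$, there exists $y\in\mathbb{F}_{q^k}$ such that $x\mapsto \operatorname{Tr}_{q^{3k}/2}\bigl(a\,g(x+y)-a\,g(x)\bigr)$ is a nonzero constant function on $\mathbb{F}_{q^{3k}}$.
   Context: For a prime power $q$ with characteristic $p$ and positive integer $m$, $S_m=x+x^q+\cdots+x^{q^{m-1}}\in\mathbb{F}_p[x]$. For fields $\mathbb{F}_{Q^n}\supseteq\mathbb{F}_Q$, $\operatorname{Tr}_{Q^n/Q}(z)=z+z^Q+\cdots+z^{Q^{n-1}}$ is the trace map. *)

From HB Require Import structures.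
From mathcomp Require Import all_boot all_order all_algebra all_field.
Set Implicit Arguments. Unset Strict Implicit. Unset Printing Implicit Defensive.
Import GRing.Theory.
Local Open Scope ring_scope.

Definition Spoly (R : nzRingType) (q m : nat) (x : R) : R :=
  \sum_(i < m) x ^+ (q ^ i)%N.

Definition Tr (R : nzRingType) (Q n : nat) (z : R) : R :=
  \sum_(i < n) z ^+ (Q ^ i)%N.

Definition gfun (R : nzRingType) (k : nat) (x : R) : R :=
  (Spoly 4 k.+1 x) ^+ 2 + (Spoly 4 (2 * k) x) ^+ (4 ^ k + 1)%N.

(* For y in F_{q^k} (q = 4) the term S_{2k}(x)^{q^k+1} of g is invariant under
   x |-> x + y, since S_{2k}(y) = 2 S_k(y) = 0, while S_{k+1}(x)^2 shifts by the
   constant S_{k+1}(y)^2.  So the difference is the constant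
   Tr_{q^{3k}/2}(a S_{k+1}(y)^2) = Tr_{q^k/2}(b S_{k+1}(y)^2) with
   b = Tr_{q^{3k}/q^k}(a) a nonzero element of F_{q^k}.  As k is even, S_{k+1} is
   injective on F_{q^k}: an element d of its kernel has d = S_k(d) and d^4 = d,
   hence S_k(d) = k d = 0.  Thus y |-> b S_{k+1}(y)^2 permutes F_{q^k}, and it hits
   an element of nonzero absolute trace because the trace polynomial has degree
   2^{2k-1} < #|F_{q^k}|. *)

From HB Require Import structures.
From mathcomp Require Import all_boot all_order all_algebra all_field.
Import GRing.Theory.
Set Implicit Arguments.
Unset Strict Implicit.
Local Open Scope ring_scope.

Lemma SpolyE (R : nzRingType) : @Spoly R = @Tr R.
Proof. by []. Qed.

Section TraceRing.
Variables (R : nzRingType) (q : nat).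
Implicit Types x : R.

Lemma Tr_addn m n x : Tr q (m + n) x = Tr q m x + Tr q n (x ^+ (q ^ m)).
Proof.
by rewrite /Tr big_split_ord; congr (_ + _); apply: eq_bigr => i _; rewrite -exprM -expnD.
Qed.

Lemma Tr_ord0 x : Tr q 0 x = 0.
Proof. exact: big_ord0. Qed.

Lemma Tr1 x : Tr q 1 x = x.
Proof. by rewrite /Tr big_ord1 expn0 expr1. Qed.

Lemma TrS m x : Tr q m.+1 x = x + Tr q m (x ^+ q).
Proof. by rewrite -add1n Tr_addn Tr1 expn1. Qed.

Lemma TrSr m x : Tr q m.+1 x = Tr q m x + x ^+ (q ^ m).
Proof. by rewrite -addn1 Tr_addn Tr1. Qed.

Lemma exprXn_fixed x n : x ^+ q = x -> x ^+ (q ^ n) = x.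
Proof. by move=> xq; elim: n => [|n IHn]; rewrite ?expr1 // expnSr exprM IHn. Qed.

Lemma Tr_fixed m x : x ^+ q = x -> Tr q m x = x *+ m.
Proof.
move=> xq; rewrite /Tr (eq_bigr (fun=> x)) ?sumr_const ?card_ord //.
by move=> i _; apply: exprXn_fixed.
Qed.

End TraceRing.

Section TraceComRing.
Variables (R : comNzRingType) (q : nat).
Implicit Types x y : R.

Lemma Tr_mulr_fixed m x y : y ^+ q = y -> Tr q m (x * y) = Tr q m x * y.
Proof.
by move=> yq; rewrite /Tr mulr_suml; apply: eq_bigr => i _; rewrite exprMn (exprXn_fixed _ yq).
Qed.

Lemma Tr_exp r m x : [pchar R].-nat r -> Tr q m x ^+ r = Tr q m (x ^+ r).
Proof.
move=> pr; have r_gt0 : (0 < r)%N by case/andP: pr.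
rewrite /Tr (big_morph (fun y => y ^+ r) (fun y z => exprDn_pchar y z pr) (expr0n _ r)).
by rewrite (gtn_eqF r_gt0); apply: eq_bigr => i _; rewrite -!exprM mulnC.
Qed.

Hypothesis q_pchar : [pchar R].-nat q.

Lemma TrD m x y : Tr q m (x + y) = Tr q m x + Tr q m y.
Proof.
by rewrite /Tr -big_split; apply: eq_bigr => i _; rewrite exprDn_pchar // pnatX q_pchar.
Qed.

Lemma Tr0 m : Tr q m 0 = 0 :> R.
Proof. by apply: (addIr (Tr q m 0)); rewrite add0r -TrD addr0. Qed.

Lemma Tr_exp_fixed m x : x ^+ (q ^ m) = x -> Tr q m x ^+ q = Tr q m x.
Proof.
by move=> xqm; apply: (addrI x); rewrite Tr_exp // -TrS TrSr xqm addrC.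
Qed.

Lemma Tr_comp s n x : Tr q (s * n) x = Tr q s (Tr (q ^ s) n x).
Proof.
elim: n => [|n IHn]; first by rewrite muln0 !Tr_ord0 Tr0.
by rewrite mulnSr Tr_addn IHn expnM -TrD -TrSr.
Qed.

End TraceComRing.

Lemma pnat_pchar2X (R : nzRingType) n : 2 \in [pchar R] -> [pchar R].-nat (2 ^ n)%N.
Proof. by move=> pch; rewrite pnatX pnatE ?pch. Qed.

Section TraceChar2.
Variables (R : comNzRingType) (q k : nat).
Hypotheses (pchar2 : 2 \in [pchar R]) (q_pchar : [pchar R].-nat q).
Implicit Types y z d : R.

Lemma Tr_double_fixed y : y ^+ (q ^ k) = y -> Tr q (2 * k) y = 0.
Proof.
by move=> yqk; rewrite mulnC Tr_comp // (Tr_fixed _ yqk) mulr2n TrD // addrr_pchar2.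
Qed.

Hypothesis k_even : ~~ odd k.

Lemma Tr_fixed_eq0 d : d ^+ (q ^ k) = d -> Tr q k.+1 d = 0 -> d = 0.
Proof.
move=> dqk Td0.
have Tk_d : Tr q k d = d.
  by apply/subr0_eq; rewrite oppr_pchar2 // -{2}dqk -TrSr.
have dq : d ^+ q = d.
  by apply/esym/subr0_eq; rewrite oppr_pchar2 // -{2}Tk_d Tr_exp // -TrS.
rewrite -Tk_d Tr_fixed // -(odd_double_half k) (negbTE k_even) add0n -muln2.
by rewrite mulrnA mulrn_pchar.
Qed.

Lemma Tr_fixed_inj y z : y ^+ (q ^ k) = y -> z ^+ (q ^ k) = z ->
  Tr q k.+1 y = Tr q k.+1 z -> y = z.
Proof.
move=> yqk zqk Tyz; apply/subr0_eq; rewrite oppr_pchar2 //.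
apply: Tr_fixed_eq0; first by rewrite exprDn_pchar ?yqk ?zqk // pnatX q_pchar.
by rewrite TrD // Tyz addrr_pchar2.
Qed.

End TraceChar2.

Lemma gfun_shift (R : comNzRingType) k (x y : R) :
  2 \in [pchar R] -> y ^+ (4 ^ k) = y ->
  gfun k (x + y) - gfun k x = Spoly 4 k.+1 y ^+ 2.
Proof.
move=> pch yQ; have p4 : [pchar R].-nat 4 := pnat_pchar2X 2 pch.
rewrite /gfun SpolyE !TrD // (Tr_double_fixed pch p4 yQ) addr0.
rewrite exprDn_pchar ?(pnat_pchar2X 1 pch) //.
by rewrite opprD addrACA subrr addr0 addrC addKr.
Qed.

Lemma size_Tr_poly (R : nzRingType) (q m : nat) : (1 < q)%N ->
  size (\sum_(i < m.+1) 'X^(q ^ i) : {poly R}) = (q ^ m).+1.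
Proof.
move=> q_gt1; elim: m => [|m IHm]; first by rewrite big_ord1 size_polyXn.
by rewrite big_ord_recr /= addrC size_polyDl size_polyXn // IHm ltnS ltn_exp2l.
Qed.

Lemma has_Tr_neq0 (R : idomainType) (q m : nat) (s : seq R) :
  (1 < q)%N -> uniq s -> (q ^ m < size s)%N -> has (fun x => Tr q m.+1 x != 0) s.
Proof.
move=> q_gt1 s_uniq; apply: contraTT => /hasPn Tr_s0.
pose t : {poly R} := \sum_(i < m.+1) 'X^(q ^ i).
have t_neq0 : t != 0 by rewrite -size_poly_eq0 size_Tr_poly.
have t_roots : all (root t) s.
  apply/allP => x /Tr_s0; rewrite negbK /root horner_sum.
  by under eq_bigr do rewrite hornerXn.
by rewrite -leqNgt -ltnS -(size_Tr_poly R m q_gt1) max_poly_roots.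
Qed.

Lemma card_fixed_ge (L : finFieldType) (Q n : nat) :
    [pchar L].-nat Q -> (0 < n)%N -> #|L| = (Q ^ n)%N ->
  (Q <= #|[set x : L | x ^+ Q == x]|)%N.
Proof.
move=> Q_pchar n_gt0 cardL.
have Q_gt1 : (1 < Q)%N.
  have Q_gt0 : (0 < Q)%N by case/andP: Q_pchar.
  rewrite ltn_neqAle Q_gt0 andbT; apply: contraTneq (card_finNzRing_gt1 L) => Q1.
  by rewrite cardL -Q1 exp1n.
pose P : {poly L} := 'X^Q - 'X.
have P_pow i : P ^+ (Q ^ i) = 'X^(Q ^ i.+1) - 'X^(Q ^ i).
  have QX_pchar : [pchar {poly L}].-nat (Q ^ i)%N.
    by rewrite (eq_pnat _ (@pchar_poly L)) pnatX Q_pchar.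
  by rewrite exprDn_pchar // exprNn_pchar // -exprM -expnS.
have P_dvd : P %| \prod_(x : L) ('X - x%:P).
  rewrite -finField_genPoly cardL -[X in _ - X]expr1 -(expn0 Q).
  (* X^(Q^n) - X telescopes into the sum of the (X^Q - X)^(Q^i), i < n. *)
  rewrite -(telescope_sumr (fun i => 'X^(Q ^ i) : {poly L}) (leq0n n)).
  apply: (big_ind (dvdp P)) => [|p r|i _]; [exact: dvdp0 | exact: dvdp_add |].
  by rewrite -P_pow dvdp_exp ?dvdpp // expn_gt0 ltnW.
have [ms P_ms] := dvdp_prod_XsubC P_dvd.
have size_P : size P = Q.+1.
  by rewrite size_polyDl size_polyXn // size_polyN size_polyX ltnS.
have := eqp_size P_ms; rewrite size_P size_prod_XsubC => -[{1}->].
move/card_uniqP: (mask_uniq (index_enum_uniq L) ms) => <-.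
apply/subset_leq_card/subsetP => x.
by rewrite -root_prod_XsubC -(eqp_root P_ms) /root !hornerE inE subr_eq0.
Qed.

Lemma exists_fixed_Tr_neq0 (L : finFieldType) (k : nat) (b : L) :
    2 \in [pchar L] -> (0 < k)%N -> ~~ odd k -> #|L| = ((4 ^ k) ^ 3)%N ->
    b ^+ (4 ^ k) = b -> b != 0 ->
  exists2 y : L, y ^+ (4 ^ k) = y & Tr 2 (2 * k) (b * Spoly 4 k.+1 y ^+ 2) != 0.
Proof.
move=> pch k_gt0 k_even cardL bQ b_neq0.
set Q := (4 ^ k)%N.
have p4 : [pchar L].-nat 4 := pnat_pchar2X 2 pch.
have pQ : [pchar L].-nat Q by rewrite pnatX p4.
pose K := [set x : L | x ^+ Q == x].
pose f y := b * Spoly 4 k.+1 y ^+ 2.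
have fK : {in K, forall y, f y \in K}.
  move=> y; rewrite !inE => /eqP yQ.
  by rewrite exprMn bQ exprAC SpolyE Tr_exp // yQ.
have f_inj : {in K &, injective f}.
  move=> y z; rewrite !inE => /eqP yQ /eqP zQ /(mulfI b_neq0).
  by move/(fmorph_inj (pFrobenius_aut pch)); rewrite SpolyE; apply: Tr_fixed_inj.
have fKK : f @: K = K.
  apply/eqP; rewrite eqEcard card_in_imset // leqnn andbT.
  by apply/subsetP => _ /imsetP[y yK ->]; apply: fK.
have [w wK Tr_w] : exists2 w, w \in K & Tr 2 (2 * k) w != 0.
  have [m def2k] : exists m, (2 * k)%N = m.+1.
    by exists (2 * k).-1; rewrite prednK ?muln_gt0.
  have : has (fun w => Tr 2 (2 * k) w != 0) (enum K).
    rewrite def2k; apply: has_Tr_neq0 (enum_uniq _) _ => //.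
    rewrite -cardE; apply: leq_trans (card_fixed_ge pQ _ cardL) => //.
    by rewrite /Q -[4%N]/(2 ^ 2)%N -expnM def2k ltn_exp2l.
  by case/hasP => w; rewrite mem_enum; exists w.
have := wK; rewrite -fKK => /imsetP[y yK w_def].
by exists y; [move: yK; rewrite inE => /eqP | rewrite w_def in Tr_w].
Qed.

Theorem mainTheorem2 (k : nat) (L : finFieldType)
  (hk : (0 < k)%N) (hev : ~~ odd k) (hL : #|L| = (4 ^ (3 * k))%N)
  (a : L) (ha : Tr (4 ^ k) 3 a != 0) :
  exists y : L, y ^+ (4 ^ k) = y /\
    exists c : L, c != 0 /\
      forall x : L, Tr 2 (6 * k) (a * gfun k (x + y) - a * gfun k x) = c.
Proof.
have pch : 2 \in [pchar L].
  apply: (card_finPcharP (n := (6 * k)%N)) => //.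
  by rewrite hL -[4%N]/(2 ^ 2)%N -expnM mulnA.
set Q := (4 ^ k)%N.
have pQ : [pchar L].-nat Q by rewrite pnatX (pnat_pchar2X 2 pch).
have cardL : #|L| = (Q ^ 3)%N by rewrite hL mulnC expnM.
have aQ3 : a ^+ (Q ^ 3) = a by rewrite -cardL expf_card.
have [y yQ Tr_neq0] := exists_fixed_Tr_neq0 pch hk hev cardL (Tr_exp_fixed pQ aQ3) ha.
exists y; split => //.
set z := Spoly 4 k.+1 y ^+ 2.
have zQ : z ^+ Q = z by rewrite exprAC SpolyE Tr_exp // yQ.
exists (Tr 2 (2 * k) (Tr Q 3 a * z)); split => // x.
rewrite -mulrBr gfun_shift // -/z (_ : 6 * k = 2 * k * 3)%N; last by rewrite mulnAC.
rewrite Tr_comp ?(pnat_pchar2X 1 pch) //.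
by rewrite (_ : 2 ^ (2 * k) = Q)%N ?(Tr_mulr_fixed 3 a zQ) // expnM.
Qed.
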